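(* Let $\beta>0$ and let $(\lambda_n)_{n\in\mathbb{N}_0}$ be complex numbers with $\limsup_{n\to\infty}|\lambda_n|/n\le\beta$. Then for every $\varepsilon>0$ there is $\alpha>0$ such that $$n!\,|\Phi_{\Lambda_n}(z)|\le e^{\alpha|z|}\left(\frac{e^{(1+\varepsilon)\beta|z|}-1}{(1+\varepsilon)\beta}\right)^n$$ for all $n\in\mathbb{N}_0$ and all $z\in\mathbb{C}$. Consequently $\limsup_{n\to\infty}\sqrt[n]{n!|\Phi_{\Lambda_n}(z)|}\le\frac{e^{\beta|z|}-1}{\beta}$ for all $z\in\mathbb{C}$.
   Context: For $\lambda_0,\dots,\lambda_n\in\mathbb{C}$ the fundamental function is the entire function $\Phi_{(\lambda_0,\dots,\lambda_n)}(z)=\frac{1}{2\pi i}\int_{|w|=R}\frac{e^{zw}}{(w-\lambda_0)\cdots(w-\lambda_n)}\,dw$, where $R>\max_j|\lambda_j|$ and the circle is positively oriented. For a sequence $(\lambda_n)$, $\Lambda_n=(\lambda_0,\dots,\lambda_n)$ and $\Phi_{\Lambda_n}=\Phi_{(\lambda_0,\dots,\lambda_n)}$. *)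

From Stdlib Require Import Reals Lra Lia ClassicalEpsilon.
Open Scope R_scope.

Record Cpx := mkC { Re : R ; Im : R }.

Definition Cplus (a b : Cpx) : Cpx := mkC (Re a + Re b) (Im a + Im b).
Definition Cminus (a b : Cpx) : Cpx := mkC (Re a - Re b) (Im a - Im b).
Definition Cmult (a b : Cpx) : Cpx :=
  mkC (Re a * Re b - Im a * Im b) (Re a * Im b + Im a * Re b).
Definition Cinv (a : Cpx) : Cpx :=
  let d := Re a * Re a + Im a * Im a in mkC (Re a / d) (- Im a / d).
Definition Cnorm (a : Cpx) : R := sqrt (Re a * Re a + Im a * Im a).
Definition Cexp (a : Cpx) : Cpx := mkC (exp (Re a) * cos (Im a)) (exp (Re a) * sin (Im a)).

Definition Rint (f : R -> R) (a b : R) : R :=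
  epsilon (inhabits 0)
    (fun I => exists pr : Riemann_integrable f a b, RiemannInt pr = I).

Fixpoint inv_prod (lam : nat -> Cpx) (n : nat) (w : Cpx) : Cpx :=
  match n with
  | O => Cinv (Cminus w (lam O))
  | S m => Cmult (inv_prod lam m w) (Cinv (Cminus w (lam (S m))))
  end.

(* a radius R > max_{j<=n} |lam j| *)
Fixpoint sum_norms (lam : nat -> Cpx) (n : nat) : R :=
  match n with
  | O => Cnorm (lam O)
  | S m => sum_norms lam m + Cnorm (lam (S m))
  end.
Definition radius (lam : nat -> Cpx) (n : nat) : R := 1 + sum_norms lam n.

(* Fundamental function Phi_{Lambda_n}(z) =
     1/(2 pi i) \oint_{|w|=R} e^{zw} / prod_{j<=n}(w - lam j) dw,
   with w = R e^{it}, dw = i w dt, t in [0, 2 pi]; i.e.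
     (1/(2 pi)) \int_0^{2 pi} e^{z w(t)} w(t) / prod_j (w(t) - lam j) dt. *)
Definition Phi_integrand (lam : nat -> Cpx) (n : nat) (z : Cpx) (t : R) : Cpx :=
  let Rr := radius lam n in
  let w := mkC (Rr * cos t) (Rr * sin t) in
  Cmult (mkC (/ (2 * PI)) 0)
        (Cmult (Cmult (Cexp (Cmult z w)) (inv_prod lam n w)) w).

Definition Phi (lam : nat -> Cpx) (n : nat) (z : Cpx) : Cpx :=
  mkC (Rint (fun t => Re (Phi_integrand lam n z t)) 0 (2 * PI))
      (Rint (fun t => Im (Phi_integrand lam n z t)) 0 (2 * PI)).

(* n-th root of a nonnegative real (with root of 0 equal to 0) *)
Definition nroot (n : nat) (x : R) : R :=
  if Rlt_dec 0 x then Rpower x (/ INR n) else 0.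

(* Write w(t) = r e^{it} for the circle of radius r > max_j |lambda_j| and, for real s,
     Psi_k(s) = (1/2pi) int_0^{2pi} e^{s z w} w prod_{j<k} (w - lambda_j)^{-1} dt,
   so that Phi_{Lambda_n}(z) = Psi_{n+1}(1).  Everything is done by real calculus on
   complex-valued functions of a real variable, without Cauchy's theorem:
   - the moments int w^{1-m} prod_{j<k}(w - lambda_j)^{-1} dt satisfy a recurrence in (k, m)
     and decay geometrically in m, which forces them to vanish for m >= 1; this gives the
     initial values Psi_{k+1}(0) = delta_{k,0};
   - differentiating under the integral sign gives Psi_0 = 0 and the linear system
     Psi_{k+1}' = z (lambda_k Psi_{k+1} + Psi_k);
   - a mean value inequality (|F b - F a| <= G b - G a whenever |F'| <= G') then yields, by
     induction on k, k! |Psi_{k+1}(s)| <= e^{C|z|s} ((e^{c|z|s} - 1)/c)^k when |lambda_j| <= C + c j;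
   - the limsup hypothesis provides such an affine bound with c = (1+eps) beta, which is the
     first claim; the second follows by letting eps -> 0 and taking n-th roots. *)

From Stdlib Require Import Reals Lra Lia Arith ClassicalEpsilon.
From Coquelicot Require Import Coquelicot.
Open Scope R_scope.

Lemma Cext (a b : Cpx) : Re a = Re b -> Im a = Im b -> a = b.
Proof. destruct a, b; simpl; intros; subst; reflexivity. Qed.

Definition C0 : Cpx := mkC 0 0.
Definition C1 : Cpx := mkC 1 0.
Definition RC (x : R) : Cpx := mkC x 0.
Definition Ci : Cpx := mkC 0 1.
Definition Cscal (s : R) (a : Cpx) : Cpx := mkC (s * Re a) (s * Im a).

Fixpoint Cpow (a : Cpx) (n : nat) : Cpx :=
  match n with O => C1 | S m => Cmult a (Cpow a m) end.

Ltac cring := apply Cext; simpl; ring.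

Lemma Cmult_comm a b : Cmult a b = Cmult b a. Proof. cring. Qed.
Lemma Cmult_assoc a b c : Cmult (Cmult a b) c = Cmult a (Cmult b c). Proof. cring. Qed.
Lemma Cmult_1_l a : Cmult C1 a = a. Proof. cring. Qed.
Lemma Cmult_0_l a : Cmult C0 a = C0. Proof. cring. Qed.

Lemma eq_of_minus_0 a b : C0 = Cminus a b -> a = b.
Proof.
  intros H. apply (f_equal Re) in H as H1; apply (f_equal Im) in H as H2.
  simpl in *. apply Cext; lra.
Qed.

Lemma Cnorm_ge0 a : 0 <= Cnorm a.
Proof. apply sqrt_pos. Qed.

Lemma Cnorm_sq a : Cnorm a * Cnorm a = Re a * Re a + Im a * Im a.
Proof. unfold Cnorm. apply sqrt_sqrt. nra. Qed.

Lemma Cnorm_C0 : Cnorm C0 = 0.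
Proof. unfold Cnorm; simpl. replace (0*0+0*0) with 0 by ring. apply sqrt_0. Qed.

Lemma Cnorm_C1 : Cnorm C1 = 1.
Proof. unfold Cnorm; simpl. replace (1*1+0*0) with 1 by ring. apply sqrt_1. Qed.

Lemma Cnorm_eq0 a : Cnorm a = 0 -> a = C0.
Proof.
  destruct a as [x y]; unfold Cnorm; simpl; intros E.
  apply sqrt_eq_0 in E; [apply Cext; simpl; nra | nra].
Qed.

Lemma Cnorm_mult a b : Cnorm (Cmult a b) = Cnorm a * Cnorm b.
Proof. unfold Cnorm. rewrite <- sqrt_mult by nra. f_equal. simpl. ring. Qed.

Lemma Cnorm_pow a m : Cnorm (Cpow a m) = Cnorm a ^ m.
Proof. induction m; simpl; [apply Cnorm_C1 | rewrite Cnorm_mult, IHm; auto]. Qed.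

Lemma Re_le a : Rabs (Re a) <= Cnorm a.
Proof.
  unfold Cnorm. rewrite <- sqrt_Rsqr_abs. apply sqrt_le_1_alt. unfold Rsqr. nra.
Qed.

Lemma Im_le a : Rabs (Im a) <= Cnorm a.
Proof.
  unfold Cnorm. rewrite <- sqrt_Rsqr_abs. apply sqrt_le_1_alt. unfold Rsqr. nra.
Qed.

Lemma Cnorm_le_sq a M : 0 <= M -> Re a * Re a + Im a * Im a <= M * M -> Cnorm a <= M.
Proof.
  intros HM H. unfold Cnorm. rewrite <- (sqrt_square M) by lra.
  apply sqrt_le_1_alt. lra.
Qed.

Lemma Cdot_le v w : Re v * Re w + Im v * Im w <= Cnorm v * Cnorm w.
Proof.
  set (cv := mkC (Re v) (- Im v)).
  assert (Hcv : Cnorm cv = Cnorm v) by (unfold Cnorm, cv; simpl; f_equal; ring).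
  pose proof (Re_le (Cmult cv w)) as H. rewrite Cnorm_mult, Hcv in H.
  apply Rabs_le_between in H. unfold cv in H; simpl in H. lra.
Qed.

Lemma Cnorm_triangle a b : Cnorm (Cplus a b) <= Cnorm a + Cnorm b.
Proof.
  pose proof (Cnorm_ge0 a); pose proof (Cnorm_ge0 b).
  pose proof (Cnorm_sq a); pose proof (Cnorm_sq b); pose proof (Cdot_le a b).
  apply Cnorm_le_sq; simpl; nra.
Qed.

Lemma Cnorm_minus_ge a b : Cnorm a - Cnorm b <= Cnorm (Cminus a b).
Proof.
  assert (E : a = Cplus (Cminus a b) b) by cring.
  pose proof (Cnorm_triangle (Cminus a b) b) as H. rewrite <- E in H. lra.
Qed.

Lemma Cnorm_exp a : Cnorm (Cexp a) = exp (Re a).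
Proof.
  unfold Cnorm, Cexp; simpl.
  replace (exp (Re a) * cos (Im a) * (exp (Re a) * cos (Im a)) +
           exp (Re a) * sin (Im a) * (exp (Re a) * sin (Im a))) with
    (exp (Re a) * exp (Re a) * (Rsqr (sin (Im a)) + Rsqr (cos (Im a)))) by (unfold Rsqr; ring).
  rewrite sin2_cos2, Rmult_1_r. apply sqrt_square. pose proof (exp_pos (Re a)); lra.
Qed.

Lemma Cnorm_pos a : a <> C0 -> 0 < Re a * Re a + Im a * Im a.
Proof.
  intros H. destruct (Req_dec (Re a) 0); destruct (Req_dec (Im a) 0); try nra.
  exfalso; apply H; apply Cext; simpl; auto.
Qed.

Lemma Cinv_r a : a <> C0 -> Cmult a (Cinv a) = C1.
Proof. intros H. pose proof (Cnorm_pos a H). apply Cext; unfold Cinv; simpl; field; lra. Qed.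

Lemma Cnorm_inv a : a <> C0 -> Cnorm (Cinv a) = / Cnorm a.
Proof.
  intros H. pose proof (Cinv_r a H) as E.
  assert (E' : Cnorm a * Cnorm (Cinv a) = 1) by (rewrite <- Cnorm_mult, E; apply Cnorm_C1).
  assert (Cnorm a <> 0) by (intro h; rewrite h in E'; lra).
  field_simplify_eq; auto. lra.
Qed.

Lemma Cnorm_nz a : 0 < Cnorm a -> a <> C0.
Proof. intros H E. subst. rewrite Cnorm_C0 in H. lra. Qed.

Lemma Cexp_0 : Cexp C0 = C1.
Proof. apply Cext; unfold Cexp; simpl; rewrite exp_0, ?cos_0, ?sin_0; ring. Qed.

Definition Ccont (f : R -> Cpx) : Prop :=
  forall t, continuity_pt (fun t => Re (f t)) t /\ continuity_pt (fun t => Im (f t)) t.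

Lemma Ccont_ext f g : (forall t, f t = g t) -> Ccont f -> Ccont g.
Proof.
  intros E H t; destruct (H t); split.
  - apply (continuity_pt_ext (fun t => Re (f t))); auto. intros; rewrite E; auto.
  - apply (continuity_pt_ext (fun t => Im (f t))); auto. intros; rewrite E; auto.
Qed.

Lemma Ccont_const c : Ccont (fun _ => c).
Proof. intro t; split; apply continuity_pt_const; intros x y; reflexivity. Qed.

Lemma Ccont_plus f g : Ccont f -> Ccont g -> Ccont (fun t => Cplus (f t) (g t)).
Proof. intros Hf Hg t; destruct (Hf t), (Hg t); simpl; split; apply continuity_pt_plus; auto. Qed.

Lemma Ccont_minus f g : Ccont f -> Ccont g -> Ccont (fun t => Cminus (f t) (g t)).
Proof. intros Hf Hg t; destruct (Hf t), (Hg t); simpl; split; apply continuity_pt_minus; auto. Qed.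

Lemma Ccont_mult f g : Ccont f -> Ccont g -> Ccont (fun t => Cmult (f t) (g t)).
Proof.
  intros Hf Hg t; destruct (Hf t), (Hg t); simpl; split.
  - apply continuity_pt_minus; apply continuity_pt_mult; auto.
  - apply continuity_pt_plus; apply continuity_pt_mult; auto.
Qed.

Lemma Ccont_scal s f : Ccont f -> Ccont (fun t => Cscal s (f t)).
Proof.
  intros Hf t; destruct (Hf t); unfold Cscal; simpl; split; apply continuity_pt_mult; auto;
    apply continuity_pt_const; intros x y; reflexivity.
Qed.

Lemma Ccont_pow f m : Ccont f -> Ccont (fun t => Cpow (f t) m).
Proof. intros H; induction m; simpl; [apply Ccont_const | apply Ccont_mult; auto]. Qed.

Lemma Ccont_exp f : Ccont f -> Ccont (fun t => Cexp (f t)).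
Proof.
  intros Hf t; destruct (Hf t) as [H1 H2]; unfold Cexp; simpl; split; apply continuity_pt_mult.
  1,3: apply (continuity_pt_comp (fun t => Re (f t)) exp); auto;
       apply derivable_continuous_pt, derivable_pt_exp.
  - apply (continuity_pt_comp (fun t => Im (f t)) cos); auto.
    apply derivable_continuous_pt, derivable_pt_cos.
  - apply (continuity_pt_comp (fun t => Im (f t)) sin); auto.
    apply derivable_continuous_pt, derivable_pt_sin.
Qed.

Lemma Ccont_inv f : Ccont f -> (forall t, f t <> C0) -> Ccont (fun t => Cinv (f t)).
Proof.
  intros Hf Hn t; destruct (Hf t). pose proof (Cnorm_pos _ (Hn t)).
  assert (Hd : continuity_pt (fun t => / (Re (f t) * Re (f t) + Im (f t) * Im (f t))) t).
  { apply continuity_pt_inv; [apply continuity_pt_plus; apply continuity_pt_mult; auto | lra]. }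
  unfold Cinv; simpl; split; unfold Rdiv; apply continuity_pt_mult; auto.
  apply continuity_pt_opp; auto.
Qed.

Definition Cderiv (f : R -> Cpx) (x : R) (d : Cpx) : Prop :=
  derivable_pt_lim (fun t => Re (f t)) x (Re d) /\
  derivable_pt_lim (fun t => Im (f t)) x (Im d).

Lemma derivable_pt_lim_eq f x l l' : l = l' -> derivable_pt_lim f x l -> derivable_pt_lim f x l'.
Proof. intros ->; auto. Qed.

Lemma Cderiv_eq f x d d' : d = d' -> Cderiv f x d -> Cderiv f x d'.
Proof. intros ->; auto. Qed.

Lemma Cderiv_const c x : Cderiv (fun _ => c) x C0.
Proof. split; simpl; apply derivable_pt_lim_const. Qed.

Lemma Cderiv_mult f g x a b : Cderiv f x a -> Cderiv g x b ->
  Cderiv (fun t => Cmult (f t) (g t)) x (Cplus (Cmult a (g x)) (Cmult (f x) b)).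
Proof.
  intros [A1 A2] [B1 B2]; split; simpl.
  - eapply derivable_pt_lim_eq; [| apply (derivable_pt_lim_minus
      (fun t => Re (f t) * Re (g t)) (fun t => Im (f t) * Im (g t)))].
    2: apply (derivable_pt_lim_mult (fun t => Re (f t)) (fun t => Re (g t))); eauto.
    2: apply (derivable_pt_lim_mult (fun t => Im (f t)) (fun t => Im (g t))); eauto.
    ring.
  - eapply derivable_pt_lim_eq; [| apply (derivable_pt_lim_plus
      (fun t => Re (f t) * Im (g t)) (fun t => Im (f t) * Re (g t)))].
    2: apply (derivable_pt_lim_mult (fun t => Re (f t)) (fun t => Im (g t))); eauto.
    2: apply (derivable_pt_lim_mult (fun t => Im (f t)) (fun t => Re (g t))); eauto.
    ring.
Qed.

Lemma Cderiv_exp f x a : Cderiv f x a -> Cderiv (fun t => Cexp (f t)) x (Cmult (Cexp (f x)) a).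
Proof.
  intros [A1 A2]. unfold Cexp; split; simpl.
  - eapply derivable_pt_lim_eq; [| apply (derivable_pt_lim_mult
      (fun t => exp (Re (f t))) (fun t => cos (Im (f t))))].
    2: apply (derivable_pt_lim_comp (fun t => Re (f t)) exp); [exact A1 | apply derivable_pt_lim_exp].
    2: apply (derivable_pt_lim_comp (fun t => Im (f t)) cos); [exact A2 | apply derivable_pt_lim_cos].
    ring.
  - eapply derivable_pt_lim_eq; [| apply (derivable_pt_lim_mult
      (fun t => exp (Re (f t))) (fun t => sin (Im (f t))))].
    2: apply (derivable_pt_lim_comp (fun t => Re (f t)) exp); [exact A1 | apply derivable_pt_lim_exp].
    2: apply (derivable_pt_lim_comp (fun t => Im (f t)) sin); [exact A2 | apply derivable_pt_lim_sin].
    ring.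
Qed.

Lemma Cderiv_scal_affine a s x : Cderiv (fun t => Cscal (s - t) a) x (Cscal (-1) a).
Proof.
  unfold Cscal; split; simpl; apply is_derive_Reals; auto_derive; auto; ring.
Qed.

Lemma nondecreasing_of_deriv (G G' : R -> R) a b : a <= b ->
  (forall x, a <= x <= b -> derivable_pt_lim G x (G' x)) ->
  (forall x, a <= x <= b -> 0 <= G' x) -> G a <= G b.
Proof.
  intros Hab HG HG'. destruct Hab as [Hab| ->]; [|lra].
  destruct (MVT_cor2 G G' a b Hab HG) as [c [E Hc]].
  assert (0 <= G' c) by (apply HG'; lra). nra.
Qed.

(* Proof: apply the real mean value theorem to the projection of F
   on the direction v = F b - F a, and combine with Cauchy-Schwarz. *)
Lemma mean_value_bound (F F' : R -> Cpx) (G G' : R -> R) a b : a <= b ->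
  (forall x, a <= x <= b -> Cderiv F x (F' x)) ->
  (forall x, a <= x <= b -> derivable_pt_lim G x (G' x)) ->
  (forall x, a <= x <= b -> Cnorm (F' x) <= G' x) ->
  Cnorm (Cminus (F b) (F a)) <= G b - G a.
Proof.
  intros Hab HF HG HB.
  set (v := Cminus (F b) (F a)). set (N := Cnorm v).
  set (phi := fun x => N * G x - (Re v * Re (F x) + Im v * Im (F x))).
  set (phi' := fun x => N * G' x - (Re v * Re (F' x) + Im v * Im (F' x))).
  assert (HN : 0 <= N) by apply Cnorm_ge0.
  assert (Hphi : phi a <= phi b).
  { apply (nondecreasing_of_deriv phi phi'); auto.
    - intros x Hx. destruct (HF x Hx) as [H1 H2]. unfold phi, phi'.
      apply derivable_pt_lim_minus; [apply (derivable_pt_lim_scal G N); auto |].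
      apply (derivable_pt_lim_plus (fun x => Re v * Re (F x)) (fun x => Im v * Im (F x)));
        apply derivable_pt_lim_scal; auto.
    - intros x Hx. unfold phi'. pose proof (Cdot_le v (F' x)) as Hcs. fold N in Hcs.
      assert (N * Cnorm (F' x) <= N * G' x) by (apply Rmult_le_compat_l; auto). lra. }
  assert (HGab : G a <= G b).
  { apply (nondecreasing_of_deriv G G'); auto.
    intros x Hx. eapply Rle_trans; [apply Cnorm_ge0 | auto]. }
  unfold phi in Hphi.
  assert (Nsq : N * N = Re v * Re v + Im v * Im v) by apply Cnorm_sq.
  assert (Re v = Re (F b) - Re (F a)) by reflexivity.
  assert (Im v = Im (F b) - Im (F a)) by reflexivity.
  fold N. destruct (Req_dec N 0); [lra |].
  apply Rmult_le_reg_l with N; nra.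
Qed.

(** * Integrals over one period [0, 2 pi] *)

Definition TwoPI : R := 2 * PI.

Lemma TwoPI_pos : 0 < TwoPI.
Proof. unfold TwoPI; pose proof PI_RGT_0; lra. Qed.

Definition Cint (f : R -> Cpx) : Cpx :=
  mkC (RInt (fun t => Re (f t)) 0 TwoPI) (RInt (fun t => Im (f t)) 0 TwoPI).

Lemma ex_RInt_cont (f : R -> R) : (forall x, continuity_pt f x) -> ex_RInt f 0 TwoPI.
Proof.
  intros H. apply ex_RInt_Reals_1, continuity_implies_RiemannInt; auto.
  pose proof TwoPI_pos; lra.
Qed.

Lemma Rint_RInt f : (forall x, continuity_pt f x) -> Rint f 0 (2 * PI) = RInt f 0 (2 * PI).
Proof.
  intros H. unfold Rint.
  assert (Hp : Riemann_integrable f 0 (2 * PI)).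
  { apply continuity_implies_RiemannInt; auto. pose proof PI_RGT_0; lra. }
  destruct (epsilon_spec (inhabits 0)
              (fun I => exists pr : Riemann_integrable f 0 (2 * PI), RiemannInt pr = I))
    as [pr E]; [exists (RiemannInt Hp); exists Hp; auto |].
  rewrite <- E. symmetry. apply RInt_Reals.
Qed.

Lemma Cint_ext f g : (forall t, f t = g t) -> Cint f = Cint g.
Proof. intros E; unfold Cint; f_equal; apply RInt_ext; intros; rewrite E; auto. Qed.

Lemma Cint_plus f g : Ccont f -> Ccont g ->
  Cint (fun t => Cplus (f t) (g t)) = Cplus (Cint f) (Cint g).
Proof.
  intros Hf Hg. unfold Cint; apply Cext; simpl; apply (RInt_plus (V := R_CompleteNormedModule));
    apply ex_RInt_cont; first [apply Hf | apply Hg].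
Qed.

Lemma Cint_minus f g : Ccont f -> Ccont g ->
  Cint (fun t => Cminus (f t) (g t)) = Cminus (Cint f) (Cint g).
Proof.
  intros Hf Hg. unfold Cint; apply Cext; simpl; apply (RInt_minus (V := R_CompleteNormedModule));
    apply ex_RInt_cont; first [apply Hf | apply Hg].
Qed.

Lemma Cint_cmult c f : Ccont f -> Cint (fun t => Cmult c (f t)) = Cmult c (Cint f).
Proof.
  intros Hf.
  assert (E1 := ex_RInt_cont _ (fun x => proj1 (Hf x))).
  assert (E2 := ex_RInt_cont _ (fun x => proj2 (Hf x))).
  unfold Cint; apply Cext; simpl;
    rewrite ?(RInt_minus (V := R_CompleteNormedModule)), ?(RInt_plus (V := R_CompleteNormedModule)),
      !(RInt_scal (V := R_CompleteNormedModule)); auto;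
    apply (ex_RInt_scal (V := R_CompleteNormedModule)); auto.
Qed.

Lemma Cint_bound f M : Ccont f -> (forall t, 0 <= t <= TwoPI -> Cnorm (f t) <= M) ->
  Cnorm (Cint f) <= 2 * TwoPI * M.
Proof.
  intros Hf HM.
  assert (E1 := ex_RInt_cont _ (fun x => proj1 (Hf x))).
  assert (E2 := ex_RInt_cont _ (fun x => proj2 (Hf x))).
  pose proof TwoPI_pos.
  assert (A1 : Rabs (Re (Cint f)) <= (TwoPI - 0) * M).
  { apply abs_RInt_le_const; auto; [lra |]. intros; eapply Rle_trans; [apply Re_le | auto]. }
  assert (A2 : Rabs (Im (Cint f)) <= (TwoPI - 0) * M).
  { apply abs_RInt_le_const; auto; [lra |]. intros; eapply Rle_trans; [apply Im_le | auto]. }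
  assert (0 <= M) by (eapply Rle_trans; [apply Cnorm_ge0 | apply (HM 0); lra]).
  pose proof (Rabs_pos (Re (Cint f))); pose proof (Rabs_pos (Im (Cint f))).
  apply Rabs_le_between in A1. apply Rabs_le_between in A2.
  apply Cnorm_le_sq; nra.
Qed.

Lemma Cint_deriv (F F' : R -> Cpx) :
  (forall x, Cderiv F x (F' x)) -> Ccont F' -> Cint F' = Cminus (F TwoPI) (F 0).
Proof.
  intros HF HC. unfold Cint; apply Cext; simpl; apply is_RInt_unique.
  - apply (is_RInt_derive (fun t => Re (F t))).
    + intros; apply is_derive_Reals, HF.
    + intros; apply continuity_pt_filterlim, HC.
  - apply (is_RInt_derive (fun t => Im (F t))).
    + intros; apply is_derive_Reals, HF.
    + intros; apply continuity_pt_filterlim, HC.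
Qed.

Lemma RInt_param_deriv (f df : R -> R -> R) s :
  (forall u t, is_derive (fun u => f u t) u (df u t)) ->
  (forall u t, continuity_2d_pt df u t) ->
  (forall u x, continuity_pt (f u) x) ->
  derivable_pt_lim (fun s => RInt (f s) 0 TwoPI) s (RInt (df s) 0 TwoPI).
Proof.
  intros Hd Hc Hf. apply is_derive_Reals.
  rewrite (RInt_ext (df s) (fun t => Derive (fun u => f u t) s));
    [| intros; symmetry; apply is_derive_unique, Hd].
  apply (is_derive_RInt_param f).
  - apply filter_forall; intros; eexists; apply Hd.
  - intros t _. apply (continuity_2d_pt_ext df); auto.
    intros; symmetry; apply is_derive_unique, Hd.
  - apply filter_forall; intros y. apply ex_RInt_cont, Hf.
Qed.

Lemma continuity_2d_pt_snd (h : R -> R) x y :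
  continuity_pt h y -> continuity_2d_pt (fun _ v => h v) x y.
Proof.
  intros H. apply (continuity_1d_2d_pt_comp h (fun _ v => v)); auto.
  apply continuity_2d_pt_id2.
Qed.

Ltac continuity_2d := repeat match goal with
 | |- continuity_2d_pt (fun u v => @?f u v + @?g u v) _ _ => apply (continuity_2d_pt_plus f g)
 | |- continuity_2d_pt (fun u v => @?f u v - @?g u v) _ _ => apply (continuity_2d_pt_minus f g)
 | |- continuity_2d_pt (fun u v => @?f u v * @?g u v) _ _ => apply (continuity_2d_pt_mult f g)
 | |- continuity_2d_pt (fun u v => - @?f u v) _ _ => apply (continuity_2d_pt_opp f)
 | |- continuity_2d_pt (fun u v => exp (@?f u v)) _ _ =>
     apply (continuity_1d_2d_pt_comp exp f); [apply derivable_continuous_pt, derivable_pt_exp|]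
 | |- continuity_2d_pt (fun u v => cos (@?f u v)) _ _ =>
     apply (continuity_1d_2d_pt_comp cos f); [apply derivable_continuous_pt, derivable_pt_cos|]
 | |- continuity_2d_pt (fun u v => sin (@?f u v)) _ _ =>
     apply (continuity_1d_2d_pt_comp sin f); [apply derivable_continuous_pt, derivable_pt_sin|]
 | |- continuity_2d_pt (fun u v => u) _ _ => apply continuity_2d_pt_id1
 | |- continuity_2d_pt (fun u v => @?h v) _ _ => apply (continuity_2d_pt_snd h)
 end.

Lemma Cint_exp_param_deriv al be s : Ccont al -> Ccont be ->
  Cderiv (fun s => Cint (fun t => Cmult (Cexp (Cscal s (al t))) (be t))) s
         (Cint (fun t => Cmult (al t) (Cmult (Cexp (Cscal s (al t))) (be t)))).
Proof.
  intros Ha Hb.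
  assert (Hf : forall u, Ccont (fun t => Cmult (Cexp (Cscal u (al t))) (be t)))
    by (intros; apply Ccont_mult; [apply Ccont_exp, Ccont_scal |]; auto).
  split.
  - apply (RInt_param_deriv (fun u t => Re (Cmult (Cexp (Cscal u (al t))) (be t)))
             (fun u t => Re (Cmult (al t) (Cmult (Cexp (Cscal u (al t))) (be t))))).
    + intros u t; unfold Cmult, Cexp, Cscal; simpl; auto_derive; auto; ring.
    + intros u t; destruct (Ha t), (Hb t); unfold Cmult, Cexp, Cscal; simpl.
      continuity_2d; auto; apply continuity_2d_pt_const.
    + intros u; apply Hf.
  - apply (RInt_param_deriv (fun u t => Im (Cmult (Cexp (Cscal u (al t))) (be t)))
             (fun u t => Im (Cmult (al t) (Cmult (Cexp (Cscal u (al t))) (be t))))).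
    + intros u t; unfold Cmult, Cexp, Cscal; simpl; auto_derive; auto; ring.
    + intros u t; destruct (Ha t), (Hb t); unfold Cmult, Cexp, Cscal; simpl.
      continuity_2d; auto; apply continuity_2d_pt_const.
    + intros u; apply Hf.
Qed.

(** * The circle w(t) = r e^{it} *)

Definition circle (r t : R) : Cpx := mkC (r * cos t) (r * sin t).

Lemma Ccont_circle r : Ccont (circle r).
Proof.
  intro t; unfold circle; simpl; split; apply continuity_pt_mult;
    try (apply continuity_pt_const; intros x y; reflexivity).
  - apply derivable_continuous_pt, derivable_pt_cos.
  - apply derivable_continuous_pt, derivable_pt_sin.
Qed.

Lemma Cnorm_circle r t : 0 <= r -> Cnorm (circle r t) = r.
Proof.
  intros; unfold Cnorm, circle; simpl.
  replace (r * cos t * (r * cos t) + r * sin t * (r * sin t))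
    with (r * r * (Rsqr (sin t) + Rsqr (cos t))) by (unfold Rsqr; ring).
  rewrite sin2_cos2, Rmult_1_r. apply sqrt_square; auto.
Qed.

Lemma Cderiv_circle r x : Cderiv (circle r) x (Cmult Ci (circle r x)).
Proof. unfold circle; split; simpl; apply is_derive_Reals; auto_derive; auto; ring. Qed.

Lemma circle_period r : circle r TwoPI = circle r 0.
Proof. unfold circle, TwoPI. rewrite cos_2PI, sin_2PI, cos_0, sin_0. auto. Qed.

Lemma circle_pow r t n : Cpow (circle r t) n = circle (r ^ n) (INR n * t).
Proof.
  induction n.
  - apply Cext; simpl; rewrite Rmult_0_l, ?cos_0, ?sin_0; ring.
  - simpl Cpow. rewrite IHn, S_INR.
    replace ((INR n + 1) * t) with (t + INR n * t) by ring.
    apply Cext; unfold circle; simpl; [rewrite cos_plus | rewrite sin_plus]; ring.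
Qed.

Lemma circle_inv r t : 0 < r -> Cinv (circle r t) = circle (/ r) (- t).
Proof.
  intros Hr.
  assert (E : r * cos t * (r * cos t) + r * sin t * (r * sin t) = r * r).
  { replace (r * cos t * (r * cos t) + r * sin t * (r * sin t))
      with (r * r * (Rsqr (sin t) + Rsqr (cos t))) by (unfold Rsqr; ring).
    rewrite sin2_cos2. ring. }
  apply Cext; unfold Cinv, circle; simpl; rewrite E, ?cos_neg, ?sin_neg; field; lra.
Qed.

Lemma RInt_cos_mode (k : nat) : (1 <= k)%nat -> RInt (fun t => cos (INR k * t)) 0 TwoPI = 0.
Proof.
  intros Hk. assert (INR k <> 0) by (apply not_0_INR; lia).
  rewrite (is_RInt_unique _ _ _ (minus (sin (INR k * TwoPI) / INR k) (sin (INR k * 0) / INR k))).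
  - unfold minus, plus, opp, TwoPI; simpl.
    replace (INR k * (2 * PI)) with (0 + 2 * INR k * PI) by ring.
    rewrite sin_period, Rmult_0_r, sin_0. field; auto.
  - apply (is_RInt_derive (fun t => sin (INR k * t) / INR k)).
    + intros; auto_derive; auto. field; auto.
    + intros. apply continuity_pt_filterlim, derivable_continuous_pt.
      apply (derivable_pt_comp (fun t => INR k * t) cos);
        [apply derivable_pt_scal, derivable_pt_id | apply derivable_pt_cos].
Qed.

Lemma RInt_sin_mode (k : nat) : (1 <= k)%nat -> RInt (fun t => sin (INR k * t)) 0 TwoPI = 0.
Proof.
  intros Hk. assert (INR k <> 0) by (apply not_0_INR; lia).
  rewrite (is_RInt_unique _ _ _ (minus (- cos (INR k * TwoPI) / INR k) (- cos (INR k * 0) / INR k))).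
  - unfold minus, plus, opp, TwoPI; simpl.
    replace (INR k * (2 * PI)) with (0 + 2 * INR k * PI) by ring.
    rewrite cos_period, Rmult_0_r, cos_0. field; auto.
  - apply (is_RInt_derive (fun t => - cos (INR k * t) / INR k)).
    + intros; auto_derive; auto. field; auto.
    + intros. apply continuity_pt_filterlim, derivable_continuous_pt.
      apply (derivable_pt_comp (fun t => INR k * t) sin);
        [apply derivable_pt_scal, derivable_pt_id | apply derivable_pt_sin].
Qed.

Lemma Cint_mode a k sg : (1 <= k)%nat -> (sg = 1 \/ sg = -1) ->
  Cint (fun t => circle a (sg * (INR k * t))) = C0.
Proof.
  intros Hk Hsg.
  assert (Hc : forall x, continuity_pt (fun t => cos (INR k * t)) x).
  { intros; apply derivable_continuous_pt.
    apply (derivable_pt_comp (fun t => INR k * t) cos);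
      [apply derivable_pt_scal, derivable_pt_id | apply derivable_pt_cos]. }
  assert (Hs : forall x, continuity_pt (fun t => sin (INR k * t)) x).
  { intros; apply derivable_continuous_pt.
    apply (derivable_pt_comp (fun t => INR k * t) sin);
      [apply derivable_pt_scal, derivable_pt_id | apply derivable_pt_sin]. }
  assert (E : forall t, circle a (sg * (INR k * t)) =
                        mkC (a * cos (INR k * t)) (sg * a * sin (INR k * t))).
  { intros t; unfold circle; destruct Hsg as [-> | ->].
    - rewrite Rmult_1_l. apply Cext; simpl; ring.
    - replace (-1 * (INR k * t)) with (- (INR k * t)) by ring.
      rewrite cos_neg, sin_neg. apply Cext; simpl; ring. }
  rewrite (Cint_ext _ _ E). unfold Cint; apply Cext; simpl;
    rewrite (RInt_scal (V := R_CompleteNormedModule)), ?RInt_cos_mode, ?RInt_sin_mode;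
    try apply ex_RInt_cont; auto; unfold scal; simpl; unfold mult; simpl; ring.
Qed.

Lemma Cint_circle r : Cint (circle r) = C0.
Proof.
  rewrite <- (Cint_mode r 1 1) by (auto; lia).
  apply Cint_ext; intros; f_equal; simpl; ring.
Qed.

Lemma Cint_inv_circle_pow r k : 0 < r -> (1 <= k)%nat ->
  Cint (fun t => Cpow (Cinv (circle r t)) k) = C0.
Proof.
  intros Hr Hk. rewrite <- (Cint_mode ((/ r) ^ k) k (-1)) by (auto; lia).
  apply Cint_ext; intros t. rewrite circle_inv, circle_pow by auto. f_equal; ring.
Qed.

Lemma Cint_one : Cint (fun _ => C1) = RC TwoPI.
Proof.
  unfold Cint; apply Cext; simpl; rewrite RInt_const;
    unfold scal; simpl; unfold mult; simpl; ring.
Qed.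

(* int e^{z w} w dt = (1/(iz)) [e^{z w}]_0^{2pi} = 0 (and trivially so for z = 0). *)
Lemma Cint_exp_circle r z :
  Cint (fun t => Cmult (Cexp (Cmult z (circle r t))) (circle r t)) = C0.
Proof.
  destruct (Req_dec (Cnorm z) 0) as [Hz | Hz].
  - apply Cnorm_eq0 in Hz; subst. transitivity (Cint (circle r)); [| apply Cint_circle].
    apply Cint_ext; intros t. rewrite Cmult_0_l, Cexp_0, Cmult_1_l; auto.
  - set (F := fun t => Cexp (Cmult z (circle r t))).
    set (iz := Cmult z Ci).
    assert (HD : forall x, Cderiv F x (Cmult iz (Cmult (F x) (circle r x)))).
    { intros x. eapply Cderiv_eq;
        [| apply Cderiv_exp, Cderiv_mult; [apply Cderiv_const | apply Cderiv_circle]].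
      unfold iz, F; cring. }
    assert (Hiz : iz <> C0).
    { apply Cnorm_nz. unfold iz. rewrite Cnorm_mult.
      replace (Cnorm Ci) with 1
        by (unfold Cnorm; simpl; replace (0*0+1*1) with 1 by ring; now rewrite sqrt_1).
      pose proof (Cnorm_ge0 z); lra. }
    assert (Hcont : Ccont (fun t => Cmult (F t) (circle r t))).
    { apply Ccont_mult; [apply Ccont_exp, Ccont_mult |]; auto using Ccont_const, Ccont_circle. }
    assert (E : Cmult iz (Cint (fun t => Cmult (F t) (circle r t))) = C0).
    { rewrite <- Cint_cmult by auto. rewrite (Cint_deriv F _ HD).
      - unfold F. rewrite circle_period. cring.
      - apply Ccont_mult; auto using Ccont_const. }
    transitivity (Cmult (Cinv iz) (Cmult iz (Cint (fun t => Cmult (F t) (circle r t))))).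
    + rewrite <- Cmult_assoc, (Cmult_comm (Cinv _)), Cinv_r by auto.
      symmetry; apply Cmult_1_l.
    + rewrite E. cring.
Qed.

(** * Moments of the partial products on the circle *)

(* A sequence of geometric growth rate rho that is also eventually a geometric recurrence
   b m = l b (m+1) with |l| rho < 1 must vanish: iterating, b m = l^K b (m+K) is O((|l| rho)^K). *)
Lemma geometric_recurrence_zero (b : nat -> Cpx) (l : Cpx) c rho m0 :
  0 <= c -> 0 <= rho -> Cnorm l * rho < 1 ->
  (forall m, Cnorm (b m) <= c * rho ^ m) ->
  (forall m, (m0 <= m)%nat -> b m = Cmult l (b (S m))) ->
  forall m, (m0 <= m)%nat -> b m = C0.
Proof.
  intros Hc Hrho Hl Hb Hrec m Hm.
  set (x := Cnorm l * rho). set (B := c * rho ^ m).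
  assert (Hx : 0 <= x) by (apply Rmult_le_pos; auto using Cnorm_ge0).
  assert (HB : 0 <= B) by (apply Rmult_le_pos; auto using pow_le).
  assert (Hiter : forall K, b m = Cmult (Cpow l K) (b (m + K)%nat)).
  { induction K as [|K IH]; [rewrite Nat.add_0_r; simpl; cring |].
    rewrite IH, (Hrec (m + K)%nat) by lia.
    replace (S (m + K)) with (m + S K)%nat by lia. simpl; cring. }
  assert (HK : forall K, Cnorm (b m) <= x ^ K * B).
  { intros K. rewrite (Hiter K), Cnorm_mult, Cnorm_pow.
    eapply Rle_trans; [apply Rmult_le_compat_l; [apply pow_le, Cnorm_ge0 | apply Hb] |].
    unfold x, B. rewrite pow_add, Rpow_mult_distr. right; ring. }
  apply Cnorm_eq0, Rle_antisym; [| apply Cnorm_ge0].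
  apply Rnot_lt_le; intros Hpos.
  destruct (pow_lt_1_zero x ltac:(rewrite Rabs_pos_eq; auto) (Cnorm (b m) / (B + 1)))
    as [K HK2]; [apply Rdiv_lt_0_compat; lra |].
  specialize (HK2 K (le_n K)). rewrite Rabs_pos_eq in HK2 by (apply pow_le; auto).
  apply (Rmult_lt_compat_r (B + 1)) in HK2; [| lra].
  unfold Rdiv in HK2. rewrite Rmult_assoc, Rinv_l, Rmult_1_r in HK2 by lra.
  pose proof (HK K). assert (0 <= x ^ K) by (apply pow_le; auto). nra.
Qed.

(* prod_{j<k} (w - lambda_j)^{-1}, so that inv_prod lam n = partial_inv_prod lam (S n). *)
Definition partial_inv_prod (lam : nat -> Cpx) (k : nat) (w : Cpx) : Cpx :=
  match k with O => C1 | S m => inv_prod lam m w end.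

Lemma partial_inv_prod_S lam k w :
  partial_inv_prod lam (S k) w = Cmult (partial_inv_prod lam k w) (Cinv (Cminus w (lam k))).
Proof. destruct k; simpl; auto. rewrite Cmult_1_l; auto. Qed.

Section Moments.
Variable lam : nat -> Cpx.
Variable r : R.
Variable N : nat.
Hypothesis Hr : forall j, (j <= N)%nat -> Cnorm (lam j) < r.

Lemma radius_pos : 0 < r.
Proof. pose proof (Hr 0 ltac:(lia)). pose proof (Cnorm_ge0 (lam 0)). lra. Qed.

Lemma circle_sub_nz j t : (j <= N)%nat -> Cminus (circle r t) (lam j) <> C0.
Proof.
  intros Hj. apply Cnorm_nz. pose proof (Cnorm_minus_ge (circle r t) (lam j)).
  rewrite Cnorm_circle in H by (pose proof radius_pos; lra). pose proof (Hr j Hj). lra.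
Qed.

Lemma circle_nz t : circle r t <> C0.
Proof. apply Cnorm_nz. rewrite Cnorm_circle; pose proof radius_pos; lra. Qed.

Lemma partial_inv_prod_peel k t : (k <= N)%nat ->
  partial_inv_prod lam k (circle r t) =
  Cmult (partial_inv_prod lam (S k) (circle r t)) (Cminus (circle r t) (lam k)).
Proof.
  intros Hk. rewrite partial_inv_prod_S, Cmult_assoc, (Cmult_comm (Cinv _)), Cinv_r
    by (apply circle_sub_nz; auto). cring.
Qed.

Lemma Ccont_partial_inv_prod k : (k <= S N)%nat ->
  Ccont (fun t => partial_inv_prod lam k (circle r t)).
Proof.
  induction k as [|k IH]; intros Hk; [exact (Ccont_const C1) |].
  apply (Ccont_ext (fun t => Cmult (partial_inv_prod lam k (circle r t))
                                   (Cinv (Cminus (circle r t) (lam k))))).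
  { intros; rewrite partial_inv_prod_S; auto. }
  apply Ccont_mult; [apply IH; lia |].
  apply Ccont_inv; [apply Ccont_minus; [apply Ccont_circle | apply Ccont_const] |].
  intros; apply circle_sub_nz; lia.
Qed.

Lemma partial_inv_prod_bounded k : (k <= S N)%nat ->
  exists M, forall t, Cnorm (partial_inv_prod lam k (circle r t)) <= M.
Proof.
  induction k as [|k IH]; intros Hk; [exists 1; intros; simpl; rewrite Cnorm_C1; lra |].
  destruct IH as [M HM]; [lia |].
  exists (M * / (r - Cnorm (lam k))). intros t.
  rewrite partial_inv_prod_S, Cnorm_mult, Cnorm_inv by (apply circle_sub_nz; lia).
  pose proof (Hr k ltac:(lia)).
  pose proof (Cnorm_minus_ge (circle r t) (lam k)).
  rewrite Cnorm_circle in H0 by (pose proof radius_pos; lra).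
  apply Rmult_le_compat; auto using Cnorm_ge0.
  - left; apply Rinv_0_lt_compat. pose proof (Cnorm_ge0 (lam k)). lra.
  - apply Rinv_le_contravar; lra.
Qed.

Definition moment (k m : nat) : Cpx :=
  Cint (fun t => Cmult (Cpow (Cinv (circle r t)) m)
                       (Cmult (circle r t) (partial_inv_prod lam k (circle r t)))).

Lemma Ccont_moment_integrand k m : (k <= S N)%nat ->
  Ccont (fun t => Cmult (Cpow (Cinv (circle r t)) m)
                        (Cmult (circle r t) (partial_inv_prod lam k (circle r t)))).
Proof.
  intros; apply Ccont_mult.
  - apply Ccont_pow, Ccont_inv; [apply Ccont_circle | apply circle_nz].
  - apply Ccont_mult; [apply Ccont_circle | apply Ccont_partial_inv_prod; auto].
Qed.

Lemma moment_0_1 : moment 0 1 = RC TwoPI.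
Proof.
  unfold moment. rewrite <- Cint_one. apply Cint_ext; intros t; simpl.
  transitivity (Cmult (circle r t) (Cinv (circle r t))); [cring | apply Cinv_r, circle_nz].
Qed.

Lemma moment_0_SS m : moment 0 (S (S m)) = C0.
Proof.
  unfold moment. rewrite <- (Cint_inv_circle_pow r (S m)) by (apply radius_pos || lia).
  apply Cint_ext; intros t. simpl partial_inv_prod.
  change (Cpow (Cinv (circle r t)) (S (S m)))
    with (Cmult (Cinv (circle r t)) (Cpow (Cinv (circle r t)) (S m))).
  transitivity (Cmult (Cmult (circle r t) (Cinv (circle r t))) (Cpow (Cinv (circle r t)) (S m)));
    [cring |].
  rewrite Cinv_r by apply circle_nz. cring.
Qed.

(* Recurrence in (k, m), from Q_k(w) = Q_{k+1}(w) (w - lambda_k). *)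
Lemma moment_rec k m : (k <= N)%nat ->
  moment k (S m) = Cminus (moment (S k) m) (Cmult (lam k) (moment (S k) (S m))).
Proof.
  intros Hk. unfold moment.
  rewrite <- Cint_cmult, <- Cint_minus.
  2-4: first [ apply Ccont_moment_integrand; lia
             | apply Ccont_mult; [apply Ccont_const | apply Ccont_moment_integrand; lia] ].
  apply Cint_ext; intros t. rewrite (partial_inv_prod_peel k t Hk).
  set (w := circle r t). set (X := Cinv w). set (Q := partial_inv_prod lam (S k) w).
  assert (HX : Cmult X w = C1) by (unfold X; rewrite Cmult_comm; apply Cinv_r, circle_nz).
  change (Cpow X (S m)) with (Cmult X (Cpow X m)).
  transitivity (Cminus (Cmult (Cmult X w) (Cmult (Cpow X m) (Cmult w Q)))
                       (Cmult (lam k) (Cmult (Cmult X (Cpow X m)) (Cmult w Q)))); [cring |].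
  rewrite HX. cring.
Qed.

Lemma moment_bound k : (k <= S N)%nat ->
  exists c, 0 <= c /\ forall m, Cnorm (moment k m) <= c * (/ r) ^ m.
Proof.
  intros Hk. destruct (partial_inv_prod_bounded k Hk) as [M HM].
  pose proof radius_pos; pose proof TwoPI_pos.
  assert (0 <= M) by (eapply Rle_trans; [apply Cnorm_ge0 | apply (HM 0)]).
  exists (2 * TwoPI * (r * M)). split; [apply Rmult_le_pos; [lra | apply Rmult_le_pos; lra] |].
  intros m. unfold moment.
  eapply Rle_trans;
    [apply (Cint_bound _ ((/ r) ^ m * (r * M))); [apply Ccont_moment_integrand; auto |] |].
  - intros t _.
    rewrite !Cnorm_mult, Cnorm_pow, Cnorm_inv, Cnorm_circle by (try apply circle_nz; lra).
    apply Rmult_le_compat_l; [apply pow_le; left; apply Rinv_0_lt_compat; lra |].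
    apply Rmult_le_compat_l; [lra | auto].
  - right; ring.
Qed.

(* All moments of order m >= 1 of Q_{k+1} vanish: the recurrence in m, read backwards, is
   geometric with ratio lambda_k, while the moments decay like r^{-m}. *)
Lemma moment_vanish k : (k <= N)%nat -> forall m, (1 <= m)%nat -> moment (S k) m = C0.
Proof.
  pose proof radius_pos.
  assert (Hratio : forall j, (j <= N)%nat -> Cnorm (lam j) * / r < 1).
  { intros j Hj. apply (Rmult_lt_reg_r r); [lra |].
    rewrite Rmult_assoc, Rinv_l by lra. apply Hr in Hj; lra. }
  assert (Hgeom : forall k, (k <= N)%nat ->
            (forall m, (1 <= m)%nat -> moment (S k) m = Cmult (lam k) (moment (S k) (S m))) ->
            forall m, (1 <= m)%nat -> moment (S k) m = C0).
  { intros j Hj Hrec. destruct (moment_bound (S j) ltac:(lia)) as [c [Hc Hb]].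
    apply (geometric_recurrence_zero (moment (S j)) (lam j) c (/ r) 1); auto.
    left; apply Rinv_0_lt_compat; lra. }
  induction k as [|k IH]; intros Hk; apply Hgeom; auto; intros m Hm; apply eq_of_minus_0.
  - destruct m as [|m]; [lia |]. rewrite <- (moment_0_SS m). apply moment_rec; lia.
  - rewrite <- (IH ltac:(lia) (S m)) by lia. apply moment_rec; lia.
Qed.

(* moment (k+1) 0 = 2 pi delta_{k,0}, which is the residue computation behind the initial
   values of Psi. *)
Lemma moment_init k : (k <= N)%nat -> moment (S k) 0 = match k with O => RC TwoPI | _ => C0 end.
Proof.
  intros Hk. pose proof (moment_rec k 0 Hk) as E.
  rewrite (moment_vanish k Hk 1) in E by lia.
  replace (moment (S k) 0) with (moment k 1)
    by (rewrite E; generalize (moment (S k) 0) (lam k); intros; cring).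
  destruct k; [apply moment_0_1 | apply moment_vanish; lia].
Qed.

End Moments.

(** * The functions Psi_k and their differential system *)

Section Psi.
Variable lam : nat -> Cpx.
Variable r : R.
Variable N : nat.
Hypothesis Hr : forall j, (j <= N)%nat -> Cnorm (lam j) < r.
Variable z : Cpx.

Definition exp_szw (s t : R) : Cpx := Cexp (Cscal s (Cmult z (circle r t))).
Definition kernel (k : nat) (t : R) : Cpx :=
  Cmult (RC (/ TwoPI)) (Cmult (partial_inv_prod lam k (circle r t)) (circle r t)).
Definition Psi (k : nat) (s : R) : Cpx := Cint (fun t => Cmult (exp_szw s t) (kernel k t)).

Lemma Ccont_kernel k : (k <= S N)%nat -> Ccont (kernel k).
Proof.
  intros; apply Ccont_mult; [apply Ccont_const |].
  apply Ccont_mult; [apply Ccont_partial_inv_prod with (N := N); auto | apply Ccont_circle].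
Qed.

Lemma Ccont_exp_szw s : Ccont (exp_szw s).
Proof.
  apply Ccont_exp, Ccont_scal, Ccont_mult; [apply Ccont_const | apply Ccont_circle].
Qed.

Lemma Psi_0 s : Psi 0 s = C0.
Proof.
  unfold Psi.
  transitivity (Cint (fun t => Cmult (RC (/ TwoPI))
                  (Cmult (Cexp (Cmult (Cscal s z) (circle r t))) (circle r t)))).
  - apply Cint_ext; intros. unfold exp_szw, kernel; simpl partial_inv_prod.
    replace (Cscal s (Cmult z (circle r t))) with (Cmult (Cscal s z) (circle r t)) by cring.
    cring.
  - rewrite Cint_cmult, Cint_exp_circle; [cring |].
    apply Ccont_mult; [apply Ccont_exp, Ccont_mult |]; auto using Ccont_const, Ccont_circle.
Qed.

(* Psi_{k+1}' = z (lambda_k Psi_{k+1} + Psi_k): differentiate under the integral and use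
   w Q_{k+1}(w) = lambda_k Q_{k+1}(w) + Q_k(w). *)
Lemma Psi_deriv k s : (k <= N)%nat ->
  Cderiv (Psi (S k)) s (Cmult z (Cplus (Cmult (lam k) (Psi (S k) s)) (Psi k s))).
Proof.
  intros Hk. unfold Psi.
  eapply Cderiv_eq; [| apply (Cint_exp_param_deriv (fun t => Cmult z (circle r t)) (kernel (S k)) s)].
  2: apply Ccont_mult; [apply Ccont_const | apply Ccont_circle].
  2: apply Ccont_kernel; lia.
  assert (Hc : forall j, (j <= S N)%nat -> Ccont (fun t => Cmult (exp_szw s t) (kernel j t)))
    by (intros; apply Ccont_mult; [apply Ccont_exp_szw | apply Ccont_kernel; auto]).
  rewrite <- Cint_cmult, <- Cint_plus, <- Cint_cmult.
  - apply Cint_ext; intros t. unfold kernel, exp_szw.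
    rewrite (partial_inv_prod_peel lam r N Hr k t Hk). cring.
  - apply Ccont_plus; [apply Ccont_mult; [apply Ccont_const | apply Hc; lia] | apply Hc; lia].
  - apply Ccont_mult; [apply Ccont_const | apply Hc; lia].
  - apply Hc; lia.
  - apply Hc; lia.
Qed.

Lemma Psi_init k : (k <= N)%nat -> Psi (S k) 0 = match k with O => C1 | _ => C0 end.
Proof.
  intros Hk. unfold Psi.
  transitivity (Cmult (RC (/ TwoPI)) (moment lam r (S k) 0)).
  - unfold moment. rewrite <- Cint_cmult by (apply Ccont_moment_integrand with (N := N); auto; lia).
    apply Cint_ext; intros. unfold exp_szw, kernel.
    replace (Cscal 0 (Cmult z (circle r t))) with C0 by cring.
    rewrite Cexp_0. simpl Cpow. cring.
  - rewrite (moment_init lam r N Hr k Hk). pose proof TwoPI_pos.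
    destruct k; [apply Cext; simpl; field; lra | cring].
Qed.

End Psi.

(** * Growth of Psi_k under an affine bound |lambda_j| <= C + c j *)

(* y |-> e^{C y} ((e^{c y} - 1)/c)^k / k!, the solution of the comparison system. *)
Definition majorant (C c : R) (k : nat) (y : R) : R :=
  exp (C * y) * (exp (c * y) - 1) ^ k / (c ^ k * INR (fact k)).

Lemma majorant_at_0 C c k : majorant C c (S k) 0 = 0.
Proof. unfold majorant. rewrite !Rmult_0_r, exp_0. cbn [pow]. unfold Rdiv; ring. Qed.

Lemma majorant_deriv C c x s m tau : 0 < c ->
  derivable_pt_lim
    (fun tau => exp ((C + c * INR (S m)) * x * (s - tau)) * majorant C c (S m) (x * tau)) tau
    (x * exp ((C + c * INR (S m)) * x * (s - tau)) * majorant C c m (x * tau)).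
Proof.
  intros Hc. apply is_derive_Reals. unfold majorant.
  assert (INR (fact m) <> 0) by (apply not_0_INR, fact_neq_0).
  assert (c ^ m <> 0) by (apply pow_nonzero; lra).
  pose proof (pos_INR m).
  auto_derive; [auto |].
  change (match m with 0%nat => 1 | S _ => INR m + 1 end) with (INR (S m)).
  rewrite plus_INR, mult_INR, S_INR.
  set (u := exp (c * (x * tau))). set (v := exp (C * (x * tau))).
  set (w := exp ((C + c * (INR m + 1)) * x * (s + - tau))).
  replace (exp ((C + c * (INR m + 1)) * x * (s - tau))) with w by (unfold w; f_equal; ring).
  replace (u + - (1)) with (u - 1) by ring.
  replace (INR (fact m) + INR m * INR (fact m)) with ((INR m + 1) * INR (fact m)) by ring.
  field. repeat split; auto; lra.
Qed.

Lemma exp_le_mono a b : a <= b -> exp a <= exp b.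
Proof. intros [H | ->]; [left; apply exp_increasing; auto | right; auto]. Qed.

Section Growth.
Variable lam : nat -> Cpx.
Variable r : R.
Variable N : nat.
Hypothesis Hr : forall j, (j <= N)%nat -> Cnorm (lam j) < r.
Variable z : Cpx.
Variables C c : R.
Hypothesis Hc : 0 < c.
Hypothesis Haffine : forall j, (j <= N)%nat -> Cnorm (lam j) <= C + c * INR j.

Local Notation x := (Cnorm z).
Local Notation Psi := (Psi lam r z).

(* Variation of constants: tau |-> e^{(s - tau) z lambda_k} Psi_{k+1}(tau). *)
Definition damped (k : nat) (s tau : R) : Cpx :=
  Cmult (Cexp (Cscal (s - tau) (Cmult z (lam k)))) (Psi (S k) tau).

(* The lambda_k terms cancel: only the coupling to Psi_k survives. *)
Lemma damped_deriv k s tau : (k <= N)%nat ->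
  Cderiv (damped k s) tau
         (Cmult (Cexp (Cscal (s - tau) (Cmult z (lam k)))) (Cmult z (Psi k tau))).
Proof.
  intros Hk. unfold damped.
  eapply Cderiv_eq;
    [| apply Cderiv_mult; [apply Cderiv_exp, Cderiv_scal_affine | apply Psi_deriv with (N := N); auto]].
  generalize (Psi (S k) tau) (Psi k tau). intros. unfold Cscal. cring.
Qed.

Lemma damped_end k s : damped k s s = Psi (S k) s.
Proof.
  unfold damped. replace (Cscal (s - s) (Cmult z (lam k))) with C0 by (unfold Cscal; cring).
  rewrite Cexp_0. apply Cmult_1_l.
Qed.

Lemma exp_factor_bound k s tau : (k <= N)%nat -> tau <= s ->
  Cnorm (Cexp (Cscal (s - tau) (Cmult z (lam k)))) <= exp ((C + c * INR k) * x * (s - tau)).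
Proof.
  intros Hk Ht. rewrite Cnorm_exp. unfold Cscal; cbn [Re]. apply exp_le_mono.
  pose proof (Re_le (Cmult z (lam k))) as H. apply Rabs_le_between in H.
  rewrite Cnorm_mult in H.
  pose proof (Haffine k Hk). assert (0 <= x) by apply Cnorm_ge0.
  assert (x * Cnorm (lam k) <= (C + c * INR k) * x) by nra.
  replace ((C + c * INR k) * x * (s - tau)) with ((s - tau) * ((C + c * INR k) * x)) by ring.
  apply Rmult_le_compat_l; lra.
Qed.

(* Base case: damped 0 s is constant, so Psi_1(s) = e^{s z lambda_0}. *)
Lemma Psi_1_bound s : 0 <= s -> Cnorm (Psi 1 s) <= majorant C c 0 (x * s).
Proof.
  intros Hs.
  assert (Hconst : Cnorm (Cminus (damped 0 s s) (damped 0 s 0)) <= 0 - 0).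
  { apply (mean_value_bound _ (fun tau => Cmult (Cexp (Cscal (s - tau) (Cmult z (lam 0))))
                                               (Cmult z (Psi 0 tau)))
                              (fun _ => 0) (fun _ => 0)); [lra | | |].
    - intros; apply damped_deriv; lia.
    - intros; apply derivable_pt_lim_const.
    - intros. rewrite Psi_0. replace (Cmult _ (Cmult z C0)) with C0 by cring.
      rewrite Cnorm_C0; lra. }
  rewrite damped_end in Hconst. unfold damped in Hconst.
  rewrite (Psi_init lam r N Hr) in Hconst by lia.
  set (E := Cexp (Cscal (s - 0) (Cmult z (lam 0)))) in Hconst.
  replace (Psi 1 s) with (Cplus (Cminus (Psi 1 s) (Cmult E C1)) E) by cring.
  eapply Rle_trans; [apply Cnorm_triangle |].
  assert (Cnorm E <= exp (C * (x * s))).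
  { unfold E. eapply Rle_trans; [apply exp_factor_bound; [lia | lra] |].
    simpl INR. right; f_equal; ring. }
  unfold majorant; simpl. replace (exp (C * (x * s)) * 1 / (1 * 1)) with (exp (C * (x * s))) by field.
  lra.
Qed.

(* Induction step: compare damped (k+1) s with e^{(C + c (k+1)) x (s - tau)} M_{k+1}(x tau). *)
Lemma Psi_bound_step k s : (S k <= N)%nat -> 0 <= s ->
  (forall tau, 0 <= tau <= s -> Cnorm (Psi (S k) tau) <= majorant C c k (x * tau)) ->
  Cnorm (Psi (S (S k)) s) <= majorant C c (S k) (x * s).
Proof.
  intros Hk Hs IH.
  set (K := (C + c * INR (S k)) * x).
  pose proof (mean_value_bound (damped (S k) s)
    (fun tau => Cmult (Cexp (Cscal (s - tau) (Cmult z (lam (S k))))) (Cmult z (Psi (S k) tau)))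
    (fun tau => exp (K * (s - tau)) * majorant C c (S k) (x * tau))
    (fun tau => x * exp (K * (s - tau)) * majorant C c k (x * tau)) 0 s Hs) as HM.
  rewrite damped_end in HM. unfold damped at 2 in HM.
  rewrite (Psi_init lam r N Hr) in HM by lia.
  replace (Cminus (Psi (S (S k)) s) (Cmult (Cexp (Cscal (s - 0) (Cmult z (lam (S k))))) C0))
    with (Psi (S (S k)) s) in HM by (generalize (Psi (S (S k)) s); intros; cring).
  rewrite Rmult_0_r, majorant_at_0, Rmult_0_r, Rminus_0_r, Rminus_diag_eq, Rmult_0_r, exp_0,
    Rmult_1_l in HM by auto.
  apply HM.
  - intros; apply damped_deriv; lia.
  - intros. unfold K. apply majorant_deriv; auto.
  - intros tau Ht. rewrite !Cnorm_mult.
    assert (0 <= x) by apply Cnorm_ge0.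
    pose proof (IH tau Ht) as H1.
    pose proof (exp_factor_bound (S k) s tau Hk ltac:(lra)) as H2. fold K in H2.
    pose proof (Cnorm_ge0 (Psi (S k) tau)).
    pose proof (Cnorm_ge0 (Cexp (Cscal (s - tau) (Cmult z (lam (S k)))))).
    replace (x * exp (K * (s - tau)) * majorant C c k (x * tau))
      with (exp (K * (s - tau)) * (x * majorant C c k (x * tau))) by ring.
    apply Rmult_le_compat; auto; [apply Rmult_le_pos; auto |].
    apply Rmult_le_compat_l; auto.
Qed.

Lemma Psi_bound k s : (k <= N)%nat -> 0 <= s -> Cnorm (Psi (S k) s) <= majorant C c k (x * s).
Proof.
  revert s; induction k as [|k IH]; intros s Hk Hs; [apply Psi_1_bound; auto |].
  apply Psi_bound_step; auto. intros tau Ht; apply IH; lia || lra.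
Qed.

End Growth.

Lemma sum_norms_nonneg lam n : 0 <= sum_norms lam n.
Proof. induction n; simpl; [apply Cnorm_ge0 | pose proof (Cnorm_ge0 (lam (S n))); lra]. Qed.

Lemma sum_norms_ge lam n j : (j <= n)%nat -> Cnorm (lam j) <= sum_norms lam n.
Proof.
  induction n; intros Hj.
  - assert (j = 0%nat) by lia; subst; simpl; lra.
  - simpl. pose proof (sum_norms_nonneg lam n). pose proof (Cnorm_ge0 (lam (S n))).
    destruct (Nat.eq_dec j (S n)); [subst; lra |]. specialize (IHn ltac:(lia)). lra.
Qed.

Lemma radius_gt lam n j : (j <= n)%nat -> Cnorm (lam j) < radius lam n.
Proof. intros Hj. unfold radius. pose proof (sum_norms_ge lam n j Hj). lra. Qed.

Lemma Phi_eq_Psi lam n z : Phi lam n z = Psi lam (radius lam n) z (S n) 1.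
Proof.
  set (r := radius lam n).
  assert (EQ : forall t, Phi_integrand lam n z t = Cmult (exp_szw r z 1 t) (kernel lam r (S n) t)).
  { intros t. unfold Phi_integrand, exp_szw, kernel. fold r. simpl partial_inv_prod.
    fold (circle r t).
    replace (Cscal 1 (Cmult z (circle r t))) with (Cmult z (circle r t)) by cring.
    unfold RC, TwoPI. cring. }
  assert (HC : Ccont (Phi_integrand lam n z)).
  { apply (Ccont_ext (fun t => Cmult (exp_szw r z 1 t) (kernel lam r (S n) t)));
      [intros; rewrite EQ; auto |].
    apply Ccont_mult; [apply Ccont_exp_szw | apply Ccont_kernel with (N := n); auto].
    apply radius_gt. }
  unfold Phi. rewrite !Rint_RInt by (intros; apply HC).
  unfold Psi. rewrite <- (Cint_ext _ _ EQ). unfold Cint, TwoPI. auto.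
Qed.

Lemma Phi_bound lam n z C c : 0 < c ->
  (forall j, (j <= n)%nat -> Cnorm (lam j) <= C + c * INR j) ->
  INR (fact n) * Cnorm (Phi lam n z) <= exp (C * Cnorm z) * ((exp (c * Cnorm z) - 1) / c) ^ n.
Proof.
  intros Hc Haff. rewrite Phi_eq_Psi.
  pose proof (Psi_bound lam (radius lam n) n (radius_gt lam n) z C c Hc Haff n 1 (le_n n)
                ltac:(lra)) as H.
  assert (0 < INR (fact n)) by (apply lt_0_INR, lt_O_fact).
  eapply Rle_trans; [apply Rmult_le_compat_l; [lra | apply H] |].
  unfold majorant. rewrite Rmult_1_r. unfold Rdiv. rewrite Rpow_mult_distr, pow_inv.
  right. field. repeat split; try lra; apply pow_nonzero; lra.
Qed.

(** * From the limsup hypothesis to the growth estimates *)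

Lemma affine_bound_of_limsup beta c (lam : nat -> Cpx) : beta < c -> 0 <= c ->
  (forall e : R, 0 < e -> exists N : nat, forall n : nat,
      (N <= n)%nat -> (1 <= n)%nat -> Cnorm (lam n) / INR n <= beta + e) ->
  exists C, 0 < C /\ forall j, Cnorm (lam j) <= C + c * INR j.
Proof.
  intros Hbc Hc Hlim. destruct (Hlim (c - beta)) as [N0 HN]; [lra |].
  pose proof (sum_norms_nonneg lam N0).
  exists (1 + sum_norms lam N0). split; [lra |].
  intros j. pose proof (pos_INR j).
  assert (0 <= c * INR j) by (apply Rmult_le_pos; auto).
  destruct (le_lt_dec j N0) as [Hj | Hj].
  - pose proof (sum_norms_ge lam N0 j Hj). lra.
  - specialize (HN j ltac:(lia) ltac:(lia)).
    assert (0 < INR j) by (apply lt_0_INR; lia).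
    apply (Rmult_le_compat_r (INR j)) in HN; [| lra].
    unfold Rdiv in HN. rewrite Rmult_assoc, Rinv_l in HN by lra. nra.
Qed.

Lemma exp_ge_1 y : 0 <= y -> 1 <= exp y.
Proof. intros; pose proof (exp_ineq1_le y); lra. Qed.

Lemma exp_sub1_le y : 0 <= y <= 1 -> exp y - 1 <= 3 * y.
Proof.
  intros Hy. pose proof (exp_ineq1_le (- y)).
  assert (E : exp y * exp (- y) = 1) by (rewrite <- exp_plus, Rplus_opp_r; apply exp_0).
  assert (exp y <= 3) by (eapply Rle_trans; [apply exp_le_mono; apply Hy | apply exp_le_3]).
  pose proof (exp_pos y). nra.
Qed.

Lemma rate_close beta x e : 0 < beta -> 0 <= x -> 0 < e ->
  exists eps, 0 < eps /\
    (exp ((1 + eps) * beta * x) - 1) / ((1 + eps) * beta) <= (exp (beta * x) - 1) / beta + e.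
Proof.
  intros Hb Hx He.
  assert (Hbx : 0 <= beta * x) by nra.
  set (eb := exp (beta * x)).
  assert (Heb : 1 <= eb) by (apply exp_ge_1; auto).
  (* eps = 1/K with K >= 1 + beta x and K >= 3 e^{beta x} x / e *)
  set (K := 1 + beta * x + 3 * eb * x / e).
  assert (HxK : 3 * eb * x <= e * K).
  { assert (0 <= 3 * eb * x / e) by (apply Rmult_le_pos; [nra | left; apply Rinv_0_lt_compat; auto]).
    unfold K. replace (3 * eb * x) with (e * (3 * eb * x / e)) at 1 by (field; lra).
    apply Rmult_le_compat_l; lra. }
  assert (HK : 1 + beta * x <= K).
  { unfold K. assert (0 <= 3 * eb * x / e)
      by (apply Rmult_le_pos; [nra | left; apply Rinv_0_lt_compat; auto]). lra. }
  assert (HiK : 0 < / K) by (apply Rinv_0_lt_compat; nra).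
  exists (/ K). split; [auto |].
  set (y := / K * beta * x).
  assert (HKy : K * y = beta * x) by (unfold y; field; nra).
  assert (Hy : 0 <= y <= 1) by (split; [unfold y; apply Rmult_le_pos; nra | nra]).
  assert (Hc : exp ((1 + / K) * beta * x) = eb * exp y)
    by (unfold eb, y; rewrite <- exp_plus; f_equal; ring).
  pose proof (exp_sub1_le y Hy).
  assert (Hey : 1 <= exp y) by (apply exp_ge_1; lra).
  (* dividing by (1 + eps) beta instead of beta only decreases the rate *)
  assert (H1 : (exp ((1 + / K) * beta * x) - 1) / ((1 + / K) * beta)
               <= (exp ((1 + / K) * beta * x) - 1) / beta).
  { unfold Rdiv. apply Rmult_le_compat_l; [rewrite Hc; nra |].
    apply Rinv_le_contravar; nra. }
  (* e^{beta x} (e^y - 1) <= 3 e^{beta x} y <= e beta *)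
  assert (H2 : eb * (exp y - 1) <= e * beta).
  { assert (eb * (exp y - 1) <= eb * (3 * y)) by (apply Rmult_le_compat_l; lra).
    assert (K * (3 * eb * y) <= K * (e * beta)) by nra. nra. }
  eapply Rle_trans; [apply H1 |]. rewrite Hc.
  replace ((eb * exp y - 1) / beta) with ((eb - 1) / beta + eb * (exp y - 1) / beta) by (field; lra).
  apply Rplus_le_compat_l. unfold Rdiv.
  apply (Rmult_le_reg_r beta); [lra |]. rewrite Rmult_assoc, Rinv_l by lra. lra.
Qed.

(* If 0 <= v_n <= e^a Q^n then eventually nroot n v_n <= Q + e, since e^{a/n} -> 1. *)
Lemma nroot_le_eventually a Q e : 0 <= a -> 0 <= Q -> 0 < e ->
  exists N : nat, forall (n : nat) (v : R), (N <= n)%nat -> (1 <= n)%nat ->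
    v <= exp a * Q ^ n -> nroot n v <= Q + e.
Proof.
  intros Ha HQ He.
  assert (H3 : 0 <= 3 * a * Q / e)
    by (apply Rmult_le_pos; [nra | left; apply Rinv_0_lt_compat; auto]).
  destruct (INR_unbounded (a + 3 * a * Q / e)) as [N HN].
  exists N. intros n v HnN Hn1 Hv.
  assert (Hn : INR N <= INR n) by (apply le_INR; auto).
  assert (Hnp : 0 < INR n) by (apply lt_0_INR; lia).
  unfold nroot. destruct (Rlt_dec 0 v) as [Hv0 | Hv0]; [| lra].
  assert (HQp : 0 < Q).
  { destruct HQ as [| HQ]; auto. rewrite <- HQ, pow_i in Hv by lia. lra. }
  set (u := / INR n * a).
  assert (Hroot : Rpower (exp a * Q ^ n) (/ INR n) = exp u * Q).
  { rewrite <- Rpower_mult_distr by (apply exp_pos || apply pow_lt; auto).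
    rewrite <- (Rpower_pow n Q HQp), Rpower_mult, Rinv_r, Rpower_1 by (auto; lra).
    unfold Rpower at 1. rewrite ln_exp. auto. }
  assert (Hnu : INR n * u = a) by (unfold u; field; lra).
  assert (Hu : 0 <= u <= 1).
  { split; [unfold u; apply Rmult_le_pos; [left; apply Rinv_0_lt_compat |]; lra | nra]. }
  assert (Hue : 3 * u * Q <= e).
  { assert (H3e : 3 * a * Q <= e * INR n).
    { replace (3 * a * Q) with (e * (3 * a * Q / e)) by (field; lra).
      apply Rmult_le_compat_l; lra. }
    rewrite <- Hnu in H3e.
    apply (Rmult_le_reg_r (INR n)); auto. nra. }
  pose proof (exp_sub1_le u Hu).
  apply Rle_trans with (Rpower (exp a * Q ^ n) (/ INR n)).
  - apply Rle_Rpower_l; [left; apply Rinv_0_lt_compat | split]; auto.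
  - rewrite Hroot. nra.
Qed.

Theorem mainTheorem6 (beta : R) (lam : nat -> Cpx) :
  0 < beta ->
  (* limsup_{n -> oo} |lam n| / n <= beta *)
  (forall e : R, 0 < e -> exists N : nat, forall n : nat,
      (N <= n)%nat -> (1 <= n)%nat -> Cnorm (lam n) / INR n <= beta + e) ->
  (forall eps : R, 0 < eps -> exists alpha : R, 0 < alpha /\
     forall (n : nat) (z : Cpx),
       INR (fact n) * Cnorm (Phi lam n z)
       <= exp (alpha * Cnorm z) *
          ((exp ((1 + eps) * beta * Cnorm z) - 1) / ((1 + eps) * beta)) ^ n)
  /\
  (* limsup_{n -> oo} (n! |Phi_{Lambda_n}(z)|)^{1/n} <= (e^{beta |z|} - 1)/beta *)
  (forall z : Cpx, forall e : R, 0 < e -> exists N : nat, forall n : nat,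
      (N <= n)%nat -> (1 <= n)%nat ->
      nroot n (INR (fact n) * Cnorm (Phi lam n z))
      <= (exp (beta * Cnorm z) - 1) / beta + e).
Proof.
  intros Hb Hlim.
  assert (Hgrowth : forall eps, 0 < eps -> exists alpha, 0 < alpha /\ forall n z,
            INR (fact n) * Cnorm (Phi lam n z) <= exp (alpha * Cnorm z) *
              ((exp ((1 + eps) * beta * Cnorm z) - 1) / ((1 + eps) * beta)) ^ n).
  { intros eps He.
    destruct (affine_bound_of_limsup beta ((1 + eps) * beta) lam) as [C [HC Haff]];
      [nra | nra | exact Hlim |].
    exists C. split; auto. intros n z. apply Phi_bound; auto; nra. }
  split; auto.
  intros z e He. pose proof (Cnorm_ge0 z) as Hz.
  destruct (rate_close beta (Cnorm z) (e / 2)) as [eps [Heps Hrate]]; [lra .. |].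
  destruct (Hgrowth eps Heps) as [alpha [Halpha Hbound]].
  assert (Hc : 0 < (1 + eps) * beta) by nra.
  set (Q := (exp ((1 + eps) * beta * Cnorm z) - 1) / ((1 + eps) * beta)).
  assert (HQ : 0 <= Q).
  { unfold Q. apply Rmult_le_pos; [| left; apply Rinv_0_lt_compat; lra].
    assert (1 <= exp ((1 + eps) * beta * Cnorm z))
      by (apply exp_ge_1, Rmult_le_pos; lra).
    lra. }
  destruct (nroot_le_eventually (alpha * Cnorm z) Q (e / 2)) as [N HN];
    [apply Rmult_le_pos; lra | auto | lra |].
  exists N. intros n HnN Hn1.
  eapply Rle_trans; [apply HN; auto; apply Hbound |]. fold Q in Hrate. lra.
Qed.
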